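(* Let $T$ be a $G$-spaced star with center $r$ and leaves $[m]$. Let $I\subsetneq[m]$ and let $T'$ be the $G$-spaced star with center $r$ (with the same $V_r,B_r$) and leaves $[m]\setminus I$, with the same spaces attached to the leaves it shares with $T$. Let $\theta$ be a $G$-invariant tensor in $\bigotimes_{v\in I}V_v^*$. Then the map $L(T)\to L(T')$ defined by $\bigotimes_{v\in[m]}x_v\mapsto\theta\bigl(\bigotimes_{v\in I}x_v\bigr)\cdot\bigotimes_{v\in[m]\setminus I}x_v$ maps $\mathcal{X}(T)$ into $\mathcal{X}(T')$.
   Context: $G$ is a finite Abelian group, $K$ an infinite field over which every finite-dimensional $G$-representation splits into one-dimensional irreducibles. A $G$-spaced star with center $r$ and leaves $[m]=\{0,\ldots,m-1\}$ consists of a star-shaped tree with these vertices, and for each vertex $v$ a finite-dimensional $G$-representation $V_v$ with a distinguished basis $B_v$ permuted by $G$ and the symmetric bilinear form $(\cdot|\cdot)_v$ making $B_v$ orthonormal. $L(T)=\bigotimes_{v\in[m]}V_v$. A $G$-representation of $T$ is a tuple $A=(A_{rv})_{v\in[m]}$ of $G$-invariant elements $A_{rv}\in V_r\otimes V_v$; writing $A_{rv}=\sum_{b\in B_r}b\otimes a_{b,v}$, set $\Psi_T(A)=\sum_{b\in B_r}\bigotimes_{v\in[m]}a_{b,v}\in L(T)$ (this is the contraction of $\bigotimes_vA_{rv}$ at the center along $\sum_{b\in B_r}(b|\cdot)_r^{\otimes m}$). The equivariant model $\mathcal{X}(T)$ is the Zariski closure of the set of all $\Psi_T(A)$. *)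

From HB Require Import structures.
From mathcomp Require Import all_boot all_order all_algebra all_fingroup.
From mathcomp Require Import mxrepresentation.
From mathcomp Require Import mpoly.

Set Implicit Arguments.
Unset Strict Implicit.
Unset Printing Implicit Defensive.

Import GRing.Theory.
Local Open Scope ring_scope.

Definition reps_split (K : fieldType) (gT : finGroupType) : Prop :=
  forall (n : nat) (rG : mx_representation K [set: gT]%G n),
    exists2 P : 'M[K]_n, P \in unitmx &
      forall g : gT, is_diag_mx (P *m rG g *m invmx P).

Definition infinite_field (K : fieldType) : Prop :=
  forall s : seq K, exists x : K, x \notin s.

Section Star.
Variables (K : fieldType) (gT : finGroupType).

(* A vertex v carries the permutation representation V_v = K^{B_v}, where the
   finite set B_v (the distinguished orthonormal basis) is permuted by gT via a
   (total) group action.  Tensors in (x)_{v in L} V_v are functions on the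
   product of the bases, i.e. coordinates in the product basis. *)
Definition tuples (L : finType) (B : L -> finType) := {dffun forall v : L, B v}.

Definition inv_edge (Br Bv : finType) (tor : {action gT &-> Br})
    (tov : {action gT &-> Bv}) (A : Br -> Bv -> K) : Prop :=
  forall (g : gT) (b : Br) (c : Bv), A (tor b g) (tov c g) = A b c.

Definition Psi (L : finType) (Br : finType) (B : L -> finType)
    (A : forall v : L, Br -> B v -> K) : {ffun tuples B -> K} :=
  [ffun x : tuples B => \sum_(b : Br) \prod_(v : L) A v b (x v)].

Definition model_image (L : finType) (Br : finType) (tor : {action gT &-> Br})
    (B : L -> finType) (to : forall v : L, {action gT &-> B v})
    (X : {ffun tuples B -> K}) : Prop :=
  exists A : forall v : L, Br -> B v -> K,
    (forall v : L, inv_edge tor (to v) (A v)) /\ X = Psi A.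

Definition coords (X : finType) (x : {ffun X -> K}) : 'I_#|X| -> K :=
  fun i => x (enum_val i).

Definition zariski_closure (X : finType) (S : {ffun X -> K} -> Prop)
    (x : {ffun X -> K}) : Prop :=
  forall p : {mpoly K[#|X|]},
    (forall y, S y -> p.@[coords y] = 0) -> p.@[coords x] = 0.

Definition equivariant_model (L : finType) (Br : finType)
    (tor : {action gT &-> Br}) (B : L -> finType)
    (to : forall v : L, {action gT &-> B v}) : {ffun tuples B -> K} -> Prop :=
  zariski_closure (model_image tor to).

Definition leavesI (m : nat) (I : {set 'I_m}) := {v : 'I_m | v \in I}.
Definition leavesC (m : nat) (I : {set 'I_m}) := {v : 'I_m | v \notin I}.

Definition inv_form (m : nat) (I : {set 'I_m}) (B : 'I_m -> finType)
    (to : forall v : 'I_m, {action gT &-> B v})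
    (theta : tuples (fun v : leavesI I => B (val v)) -> K) : Prop :=
  forall (g : gT) (z : tuples (fun v : leavesI I => B (val v))),
    theta [ffun v : leavesI I => to (val v) (z v) g] = theta z.

Definition contract (m : nat) (I : {set 'I_m}) (B : 'I_m -> finType)
    (theta : tuples (fun v : leavesI I => B (val v)) -> K)
    (X : {ffun tuples B -> K}) : {ffun tuples (fun v : leavesC I => B (val v)) -> K} :=
  [ffun y : tuples (fun v : leavesC I => B (val v)) =>
     \sum_(x : tuples B | [forall v : leavesC I, x (val v) == y v])
        theta [ffun v : leavesI I => x (val v)] * X x].

End Star.

(* Contracting the leaves in I of Psi_T(A) = sum_b (x)_v a_{b,v} gives
   sum_b c(b) (x)_{v notin I} a_{b,v} with c(b) = theta((x)_{v in I} a_{b,v}).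
   Since theta and the edges are G-invariant, c is a G-invariant function on
   B_r, so it can be absorbed into the edge of any remaining leaf (there is one
   because I is proper): the contraction of a point of the model is again a
   point of the model.  The contraction is linear, so polynomials on L(T')
   pull back to polynomials on L(T), and the inclusion passes to Zariski
   closures. *)

From HB Require Import structures.
From mathcomp Require Import all_boot all_order all_algebra all_fingroup.
From mathcomp Require Import mxrepresentation mpoly.

Set Implicit Arguments.
Unset Strict Implicit.
Unset Printing Implicit Defensive.

Import GRing.Theory.
Local Open Scope ring_scope.

Section PolynomialMap.
Variables (K : fieldType) (X Y : finType).

Definition polynomial_map (f : {ffun X -> K} -> {ffun Y -> K}) : Prop :=
  exists q : Y -> {mpoly K[#|X|]}, forall x y, f x y = (q y).@[coords x].

Lemma polynomial_map_comp (f : {ffun X -> K} -> {ffun Y -> K})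
    (p : {mpoly K[#|Y|]}) :
  polynomial_map f ->
  exists q : {mpoly K[#|X|]}, forall x, q.@[coords x] = p.@[coords (f x)].
Proof.
move=> [q fq]; exists (p \mPo [tuple q (enum_val i) | i < #|Y|]) => x.
rewrite comp_mpoly_meval; apply: meval_eq => i.
by rewrite tnth_mktuple /coords fq.
Qed.

Lemma zariski_closure_polynomial_map (f : {ffun X -> K} -> {ffun Y -> K})
    (S : {ffun X -> K} -> Prop) (S' : {ffun Y -> K} -> Prop)
    (x : {ffun X -> K}) :
  polynomial_map f -> (forall y, S y -> S' (f y)) ->
  zariski_closure S x -> zariski_closure S' (f x).
Proof.
move=> pf fS Sx p p0; have [q qE] := polynomial_map_comp p pf.
by rewrite -qE; apply: Sx => y Sy; rewrite qE; apply/p0/fS.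
Qed.

End PolynomialMap.

Lemma big_leaves (R : Type) (idx : R) (op : Monoid.com_law idx)
    (m : nat) (I : {set 'I_m}) (F : 'I_m -> R) :
  \big[op/idx]_(v : 'I_m) F v =
  op (\big[op/idx]_(w : leavesI I) F (val w))
     (\big[op/idx]_(w : leavesC I) F (val w)).
Proof. by rewrite (bigID (mem I)) /= (big_sub I) (big_sub [predC I]). Qed.

Section Merge.
Variables (m : nat) (I : {set 'I_m}) (B : 'I_m -> finType).

Local Notation tI := (tuples (fun v : leavesI I => B (val v))).
Local Notation tC := (tuples (fun v : leavesC I => B (val v))).

Definition merge (y : tC) (z : tI) : tuples B :=
  [ffun v : 'I_m => match (v \in I) as b return (v \in I) = b -> B v with
     | true => fun h => z (exist _ v h)
     | false => fun h => y (exist _ v (negbT h)) end erefl].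

Definition restrI (x : tuples B) : tI := [ffun w : leavesI I => x (val w)].

Lemma merge_I y z (w : leavesI I) : merge y z (val w) = z w.
Proof.
case: w => v vI /=; rewrite ffunE.
move: (erefl (v \in I)); rewrite {2 3}vI => h.
by rewrite (eq_irrelevance h vI).
Qed.

Lemma merge_C y z (w : leavesC I) : merge y z (val w) = y w.
Proof.
case: w => v vC /=; rewrite ffunE.
move: (erefl (v \in I)); rewrite {2 3}(negbTE vC) => h.
by rewrite (eq_irrelevance (negbT h) vC).
Qed.

Lemma restrI_merge y z : restrI (merge y z) = z.
Proof. by apply/ffunP => w; rewrite ffunE merge_I. Qed.

Lemma merge_restrI (y : tC) (x : tuples B) :
  [forall w : leavesC I, x (val w) == y w] -> merge y (restrI x) = x.
Proof.
move=> /forallP xy; apply/ffunP => v; rewrite ffunE.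
move: (erefl (v \in I)); case: {2 3}(v \in I) => h; first by rewrite ffunE.
by move/eqP: (xy (exist _ v (negbT h))).
Qed.

Lemma merge_agree y z : [forall w : leavesC I, merge y z (val w) == y w].
Proof. by apply/forallP => w; rewrite merge_C. Qed.

Lemma sum_extensions (R : nmodType) (y : tC) (F : tuples B -> R) :
  \sum_(x : tuples B | [forall w : leavesC I, x (val w) == y w]) F x =
  \sum_(z : tI) F (merge y z).
Proof.
rewrite (reindex (merge y)) /=; last first.
  by exists restrI => [z _ | x]; rewrite ?restrI_merge // inE => /merge_restrI.
by apply: eq_bigl => z; rewrite merge_agree.
Qed.

End Merge.

Lemma contract_polynomial_map (K : fieldType) (m : nat) (I : {set 'I_m})
    (B : 'I_m -> finType)
    (theta : tuples (fun v : leavesI I => B (val v)) -> K) :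
  polynomial_map (contract theta).
Proof.
exists (fun y : tuples (fun v : leavesC I => B (val v)) =>
  \sum_(x : tuples B | [forall w : leavesC I, x (val w) == y w])
    theta [ffun w : leavesI I => x (val w)] *: 'X_(enum_rank x)) => X y.
rewrite ffunE raddf_sum /=; apply: eq_bigr => x _.
by rewrite mevalZ mevalXU /coords enum_rankK.
Qed.

Section ContractImage.
Variables (gT : finGroupType) (K : fieldType).
Variables (Br : finType) (tor : {action gT &-> Br}).
Variables (m : nat) (B : 'I_m -> finType).
Variable to : forall v : 'I_m, {action gT &-> B v}.
Variables (I : {set 'I_m}).
Variable theta : tuples (fun v : leavesI I => B (val v)) -> K.
Hypothesis theta_inv : inv_form to theta.
Variable A : forall v : 'I_m, Br -> B v -> K.
Arguments A : clear implicits.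
Hypothesis A_inv : forall v, inv_edge tor (to v) (A v).

Definition contract_weight (b : Br) : K :=
  \sum_(z : tuples (fun v : leavesI I => B (val v)))
    theta z * \prod_(w : leavesI I) A (val w) b (z w).

Lemma contract_weight_inv (g : gT) (b : Br) :
  contract_weight (tor b g) = contract_weight b.
Proof.
pose act h (z : tuples (fun v : leavesI I => B (val v))) :
  tuples (fun v : leavesI I => B (val v)) :=
  [ffun w : leavesI I => to (val w) (z w) h].
rewrite /contract_weight (reindex (act g)) /=; last first.
  by exists (act g^-1%g) => z _; apply/ffunP => w; rewrite !ffunE ?actK ?actKV.
apply: eq_bigr => z _; rewrite theta_inv; congr (_ * _).
by apply: eq_bigr => w _; rewrite ffunE A_inv.
Qed.

Lemma contract_Psi :
  contract theta (Psi A) =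
  [ffun y : tuples (fun v : leavesC I => B (val v)) => \sum_(b : Br)
     contract_weight b * \prod_(w : leavesC I) A (val w) b (y w)].
Proof.
apply/ffunP => y; rewrite !ffunE sum_extensions.
under eq_bigr do rewrite ffunE mulr_sumr.
rewrite exchange_big /=; apply: eq_bigr => b _.
rewrite /contract_weight mulr_suml; apply: eq_bigr => z _.
rewrite -[X in theta X]/(restrI I (merge y z)) restrI_merge (big_leaves _ I).
rewrite mulrA; congr (_ * _ * _).
  by apply: eq_bigr => w _; rewrite merge_I.
by apply: eq_bigr => w _; rewrite merge_C.
Qed.

End ContractImage.

Lemma model_image_contract (gT : finGroupType) (K : fieldType)
    (Br : finType) (tor : {action gT &-> Br})
    (m : nat) (B : 'I_m -> finType) (to : forall v : 'I_m, {action gT &-> B v})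
    (I : {set 'I_m}) (HI : I \proper [set: 'I_m])
    (theta : tuples (fun v : leavesI I => B (val v)) -> K)
    (theta_inv : inv_form to theta) (X : {ffun tuples B -> K}) :
  model_image tor to X ->
  model_image tor (fun v : leavesC I => to (val v)) (contract theta X).
Proof.
have [_ [v0 _ v0I]] := properP HI; pose w0 : leavesC I := exist _ v0 v0I.
move=> [A [A_inv ->]].
exists (fun w b c =>
  (if w == w0 then contract_weight theta A b else 1) * A (val w) b c).
split=> [w g b c | ].
  by rewrite A_inv (contract_weight_inv theta_inv A_inv).
rewrite contract_Psi; apply/ffunP => y; rewrite !ffunE; apply: eq_bigr => b _.
by rewrite big_split /= -big_mkcond big_pred1_eq.
Qed.

Theorem lemma6p4 (gT : finGroupType) (K : fieldType)
    (abG : abelian [set: gT]) (Kinf : infinite_field K)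
    (Ksplit : reps_split K gT)
    (Br : finType) (tor : {action gT &-> Br})
    (m : nat) (B : 'I_m -> finType) (to : forall v : 'I_m, {action gT &-> B v})
    (I : {set 'I_m}) (HI : I \proper [set: 'I_m])
    (theta : tuples (fun v : leavesI I => B (val v)) -> K)
    (Htheta : inv_form to theta)
    (X : {ffun tuples B -> K}) :
  equivariant_model tor to X ->
  equivariant_model tor (fun v : leavesC I => to (val v)) (contract theta X).
Proof.
apply: zariski_closure_polynomial_map; first exact: contract_polynomial_map.
exact: model_image_contract.
Qed.
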